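(* (Bicategorical Quillen Theorem A.) Let $F\colon \mathcal{B}\to\mathcal{C}$ be a lax functor of bicategories, and suppose: (1) for each object $X\in\mathcal{C}$, the lax slice bicategory $F\downarrow X$ has an inc-lax terminal object $(\overline{X},f_{\overline{X}})$, with associated inc-lax transformation $k^X\colon \mathrm{Id}_{F\downarrow X}\to \mathrm{const}_{(\overline{X},f_{\overline{X}})}$; (2) for each 1-cell $u\colon X\to Y$ in $\mathcal{C}$, the change-of-slice strict functor $F\downarrow u\colon F\downarrow X\to F\downarrow Y$ preserves initial components (with respect to the inc-lax terminal objects in (1)). Then there exist a lax functor $G\colon\mathcal{C}\to\mathcal{B}$ and lax transformations $\eta\colon \mathrm{Id}_{\mathcal{B}}\to GF$ and $\epsilon\colon FG\to\mathrm{Id}_{\mathcal{C}}$.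
   Context: Conventions: for a lax functor $F$ between bicategories, the lax constraints are 2-cells $F^2_{g,f}\colon Fg\circ Ff\Rightarrow F(gf)$ and $F^0_X\colon 1_{FX}\Rightarrow F1_X$, natural and satisfying the usual lax associativity and lax unity axioms; a pseudofunctor is a lax functor whose constraints are invertible; a strict functor has identity constraints. A lax transformation $\alpha\colon F\to G$ between lax functors $\mathcal{B}\to\mathcal{C}$ consists of 1-cells $\alpha_X\colon FX\to GX$ and 2-cells $\alpha_f\colon Gf\circ\alpha_X\Rightarrow \alpha_Y\circ Ff$ natural in $f$, satisfying the lax unity and lax naturality axioms; it is strong if all $\alpha_f$ are invertible. $GF$ denotes the composite lax functor. Lax slice: for a lax functor $F\colon\mathcal{B}\to\mathcal{C}$ and $X\in\mathcal{C}$, the bicategory $F\downarrow X$ has objects pairs $(A,f_A)$ with $A\in\mathcal{B}$ and $f_A\colon FA\to X$ in $\mathcal{C}$; 1-cells $(A_0,f_0)\to(A_1,f_1)$ are pairs $(p,\theta)$ with $p\colon A_0\to A_1$ in $\mathcal{B}$ and $\theta\colon f_0\Rightarrow f_1\circ Fp$ a 2-cell in $\mathcal{C}$; 2-cells $(p_0,\theta_0)\to(p_1,\theta_1)$ are 2-cells $\alpha\colon p_0\Rightarrow p_1$ in $\mathcal{B}$ with $(1_{f_1}* F\alpha)\circ\theta_0=\theta_1$. The identity 1-cell of $(A,f_A)$ is $(1_A,(1_{f_A}*F^0_A)\circ r^{-1}_{f_A})$; the composite of $(p_0,\theta_0)\colon(A_0,f_0)\to(A_1,f_1)$ and $(p_1,\theta_1)\colon(A_1,f_1)\to(A_2,f_2)$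 is $(p_1p_0,\theta')$ with $\theta'=(1_{f_2}*F^2_{p_1,p_0})\circ a\circ(\theta_1*1_{Fp_0})\circ\theta_0$; vertical and horizontal composition of 2-cells, associator and unitors are those of $\mathcal{B}$. Change-of-slice: for $u\colon X\to Y$ in $\mathcal{C}$, $F\downarrow u\colon F\downarrow X\to F\downarrow Y$ sends $(A,f_A)\mapsto(A,uf_A)$, $(p,\theta)\mapsto(p,a^{-1}\circ(1_u*\theta))$, $\alpha\mapsto\alpha$. Constant pseudofunctor: for an object $T$ of a bicategory $\mathcal{D}$ and a bicategory $\mathcal{A}$, $\mathrm{const}_T\colon\mathcal{A}\to\mathcal{D}$ sends every object to $T$, every 1-cell to $1_T$, every 2-cell to $1_{1_T}$, with $(\mathrm{const}_T)^0=1_{1_T}$ and $(\mathrm{const}_T)^2=\ell_{1_T}$. Inc-lax terminal object: an object $T$ of a bicategory $\mathcal{D}$ together with a lax transformation $k\colon\mathrm{Id}_{\mathcal{D}}\to\mathrm{const}_T$ such that each component $k_Z\colon Z\to T$ is an initial object of the hom-category $\mathcal{D}(Z,T)$, and $k_T=1_T$. Preserving initial components: if bicategories $\mathcal{D},\mathcal{E}$ have inc-lax terminal objects $(T,k)$ and $(T',k')$, a lax functor $H\colon\mathcal{D}\to\mathcal{E}$ preserves initial components if for every object $Z$ of $\mathcal{D}$ the composite $k'_{HT}\circ Hk_Z\colon HZ\to T'$ is initial in $\mathcal{E}(HZ,T')$. *)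

Set Implicit Arguments.
Unset Strict Implicit.


Record bicat_data : Type := {
  ob :> Type;
  hom : ob -> ob -> Type;
  cell : forall a b : ob, hom a b -> hom a b -> Type;
  id1 : forall a : ob, hom a a;
  comp1 : forall a b c : ob, hom b c -> hom a b -> hom a c;
  id2 : forall (a b : ob) (f : hom a b), cell f f;
  vcomp : forall (a b : ob) (f g h : hom a b), cell g h -> cell f g -> cell f h;
  hcomp : forall (a b c : ob) (f f' : hom b c) (g g' : hom a b),
      cell f f' -> cell g g' -> cell (comp1 f g) (comp1 f' g');
  assoc : forall (a b c d : ob) (h : hom c d) (g : hom b c) (f : hom a b),
      cell (comp1 (comp1 h g) f) (comp1 h (comp1 g f));
  assoc_inv : forall (a b c d : ob) (h : hom c d) (g : hom b c) (f : hom a b),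
      cell (comp1 h (comp1 g f)) (comp1 (comp1 h g) f);
  lunit : forall (a b : ob) (f : hom a b), cell (comp1 (id1 b) f) f;
  lunit_inv : forall (a b : ob) (f : hom a b), cell f (comp1 (id1 b) f);
  runit : forall (a b : ob) (f : hom a b), cell (comp1 f (id1 a)) f;
  runit_inv : forall (a b : ob) (f : hom a b), cell f (comp1 f (id1 a))
}.



Declare Scope bicat_scope.
Open Scope bicat_scope.
Notation "g ⊚ f" := (comp1 g f) (at level 40, left associativity) : bicat_scope.
Notation "β ⋆ α" := (hcomp β α) (at level 40, left associativity) : bicat_scope.
Notation "β • α" := (vcomp β α) (at level 50, left associativity) : bicat_scope.


Record is_bicat (B : bicat_data) : Prop := {
  vassoc : forall (a b : B) (f g h k : hom a b) (γ : cell h k) (β : cell g h) (α : cell f g),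
      γ • (β • α) = γ • β • α;
  vid_l : forall (a b : B) (f g : hom a b) (α : cell f g), id2 g • α = α;
  vid_r : forall (a b : B) (f g : hom a b) (α : cell f g), α • id2 f = α;
  hid : forall (a b c : B) (f : hom b c) (g : hom a b), id2 f ⋆ id2 g = id2 (f ⊚ g);
  interchange : forall (a b c : B) (f f' f'' : hom b c) (g g' g'' : hom a b)
      (β' : cell f' f'') (β : cell f f') (α' : cell g' g'') (α : cell g g'),
      (β' • β) ⋆ (α' • α) = (β' ⋆ α') • (β ⋆ α);
  assoc_nat : forall (a b c d : B) (h h' : hom c d) (g g' : hom b c) (f f' : hom a b)
      (γ : cell h h') (β : cell g g') (α : cell f f'),
      assoc h' g' f' • (γ ⋆ β ⋆ α) = (γ ⋆ (β ⋆ α)) • assoc h g f;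
  assoc_iso1 : forall (a b c d : B) (h : hom c d) (g : hom b c) (f : hom a b),
      assoc h g f • assoc_inv h g f = id2 _;
  assoc_iso2 : forall (a b c d : B) (h : hom c d) (g : hom b c) (f : hom a b),
      assoc_inv h g f • assoc h g f = id2 _;
  lunit_nat : forall (a b : B) (f f' : hom a b) (α : cell f f'),
      lunit f' • (id2 (id1 b) ⋆ α) = α • lunit f;
  lunit_iso1 : forall (a b : B) (f : hom a b), lunit f • lunit_inv f = id2 _;
  lunit_iso2 : forall (a b : B) (f : hom a b), lunit_inv f • lunit f = id2 _;
  runit_nat : forall (a b : B) (f f' : hom a b) (α : cell f f'),
      runit f' • (α ⋆ id2 (id1 a)) = α • runit f;
  runit_iso1 : forall (a b : B) (f : hom a b), runit f • runit_inv f = id2 _;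
  runit_iso2 : forall (a b : B) (f : hom a b), runit_inv f • runit f = id2 _;
  pentagon : forall (a b c d e : B) (k : hom d e) (h : hom c d) (g : hom b c) (f : hom a b),
      (id2 k ⋆ assoc h g f) • assoc k (h ⊚ g) f • (assoc k h g ⋆ id2 f)
      = assoc k h (g ⊚ f) • assoc (k ⊚ h) g f;
  triangle : forall (a b c : B) (g : hom b c) (f : hom a b),
      (id2 g ⋆ lunit f) • assoc g (id1 b) f = runit g ⋆ id2 f
}.

Record bicat : Type := { bc_data :> bicat_data; bc_ax : is_bicat bc_data }.

Section BicatLemmas.
Context (B : bicat_data) (HB : is_bicat B).

Lemma vpre (a b : B) (f g h : hom a b) (X : cell g h) (Y : cell f g) (Z : cell f h) :
  X • Y = Z -> forall k (W : cell h k), W • X • Y = W • Z.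
Proof. intros E k W. rewrite <- (vassoc HB). now rewrite E. Qed.

Lemma vpre3 (a b : B) (e f g h : hom a b) (X : cell g h) (Y : cell f g) (Y' : cell e f) (Z : cell e h) :
  X • Y • Y' = Z -> forall k (W : cell h k), W • X • Y • Y' = W • Z.
Proof. intros E k W. rewrite <- !(vassoc HB). rewrite (vassoc HB X). now rewrite E. Qed.

Lemma hwl (a b c : B) (f : hom b c) (g g' g'' : hom a b) (β : cell g' g'') (α : cell g g') :
  (id2 f ⋆ β) • (id2 f ⋆ α) = id2 f ⋆ (β • α).
Proof. now rewrite <- (interchange HB), (vid_l HB). Qed.

Lemma hwr (a b c : B) (f f' f'' : hom b c) (g : hom a b) (β : cell f' f'') (α : cell f f') :
  (β ⋆ id2 g) • (α ⋆ id2 g) = (β • α) ⋆ id2 g.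
Proof. now rewrite <- (interchange HB), (vid_l HB). Qed.

Lemma hsplit1 (a b c : B) (f f' : hom b c) (g g' : hom a b) (β : cell f f') (α : cell g g') :
  β ⋆ α = (β ⋆ id2 g') • (id2 f ⋆ α).
Proof. now rewrite <- (interchange HB), (vid_l HB), (vid_r HB). Qed.

Lemma hsplit2 (a b c : B) (f f' : hom b c) (g g' : hom a b) (β : cell f f') (α : cell g g') :
  β ⋆ α = (id2 f' ⋆ α) • (β ⋆ id2 g).
Proof. now rewrite <- (interchange HB), (vid_l HB), (vid_r HB). Qed.

Lemma assoc_inv_nat (a b c d : B) (h h' : hom c d) (g g' : hom b c) (f f' : hom a b)
      (γ : cell h h') (β : cell g g') (α : cell f f') :
  assoc_inv h' g' f' • (γ ⋆ (β ⋆ α)) = (γ ⋆ β ⋆ α) • assoc_inv h g f.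
Proof.
  transitivity (assoc_inv h' g' f' • ((γ ⋆ (β ⋆ α)) • assoc h g f) • assoc_inv h g f).
  - rewrite <- !(vassoc HB), (assoc_iso1 HB), (vid_r HB). reflexivity.
  - rewrite <- (assoc_nat HB), (vassoc HB), (assoc_iso2 HB), (vid_l HB). reflexivity.
Qed.

Lemma hcancel_r (a b : B) (f g : hom a b) (α β : cell f g) :
  α ⋆ id2 (id1 a) = β ⋆ id2 (id1 a) -> α = β.
Proof.
  intros E.
  assert (Hx : forall γ : cell f g, γ = runit g • (γ ⋆ id2 (id1 a)) • runit_inv f).
  { intros γ. rewrite (runit_nat HB), <- (vassoc HB), (runit_iso1 HB), (vid_r HB). reflexivity. }
  rewrite (Hx α), (Hx β), E. reflexivity.
Qed.

Lemma kelly (a b c : B) (f : hom b c) (g : hom a b) :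
  (id2 f ⋆ runit g) • assoc f g (id1 a) = runit (f ⊚ g).
Proof.
  apply hcancel_r.
  assert (P := pentagon HB f g (id1 a) (id1 a)).
  assert (E : id2 f ⋆ (id2 g ⋆ lunit (id1 a)) • ((id2 f ⋆ assoc g (id1 a) (id1 a)) • assoc f (g ⊚ id1 a) (id1 a) • (assoc f g (id1 a) ⋆ id2 (id1 a)))
            = id2 f ⋆ (id2 g ⋆ lunit (id1 a)) • (assoc f g (id1 a ⊚ id1 a) • assoc (f ⊚ g) (id1 a) (id1 a))) by now rewrite P.
  clear P.
  rewrite !(vassoc HB) in E.
  rewrite hwl, (triangle HB) in E.
  rewrite <- 2!(assoc_nat HB) in E.
  rewrite (hid HB) in E.
  rewrite <- (vassoc HB _ (id2 (f ⊚ g) ⋆ lunit (id1 a))), (triangle HB) in E.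
  rewrite <- !(vassoc HB), hwr in E.
  assert (E2 := f_equal (fun z => assoc_inv f g (id1 a) • z) E). simpl in E2.
  rewrite !(vassoc HB), (assoc_iso2 HB), !(vid_l HB) in E2.
  exact E2.
Qed.

Lemma kelly_inv (a b c : B) (f : hom b c) (g : hom a b) :
  assoc_inv f g (id1 a) • (id2 f ⋆ runit_inv g) = runit_inv (f ⊚ g).
Proof.
  rewrite <- (vid_r HB (assoc_inv f g (id1 a) • _)).
  rewrite <- (runit_iso1 HB (f ⊚ g)), <- kelly.
  rewrite !(vassoc HB).
  rewrite <- (vassoc HB _ _ (id2 f ⋆ runit g)), hwl, (runit_iso2 HB), (hid HB), (vid_r HB).
  rewrite (assoc_iso2 HB), (vid_l HB). reflexivity.
Qed.

Lemma pentagon_inv (a b c d e : B) (k : hom d e) (h : hom c d) (g : hom b c) (f : hom a b) :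
  assoc_inv k h (g ⊚ f) • (id2 k ⋆ assoc h g f)
  = assoc (k ⊚ h) g f • (assoc_inv k h g ⋆ id2 f) • assoc_inv k (h ⊚ g) f.
Proof.
  assert (P := pentagon HB k h g f).
  transitivity (assoc_inv k h (g ⊚ f) • ((id2 k ⋆ assoc h g f) • assoc k (h ⊚ g) f • (assoc k h g ⋆ id2 f))
                 • (assoc_inv k h g ⋆ id2 f) • assoc_inv k (h ⊚ g) f).
  - rewrite <- !(vassoc HB). f_equal.
    rewrite (vassoc HB (assoc k h g ⋆ id2 f)), hwr, (assoc_iso1 HB), (hid HB), (vid_l HB).
    rewrite (assoc_iso1 HB), (vid_r HB). reflexivity.
  - rewrite P. rewrite (vassoc HB), (assoc_iso2 HB), (vid_l HB). reflexivity.
Qed.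

End BicatLemmas.

(** * Lax functors *)
Record lax_data (B C : bicat_data) : Type := {
  fob :> B -> C;
  fmor : forall a b : B, hom a b -> hom (fob a) (fob b);
  fcell : forall (a b : B) (f g : hom a b), cell f g -> cell (fmor f) (fmor g);
  fcomp : forall (a b c : B) (g : hom b c) (f : hom a b),
      cell (fmor g ⊚ fmor f) (fmor (g ⊚ f));
  funit : forall a : B, cell (id1 (fob a)) (fmor (id1 a))
}.
Arguments fob {B C} l _.
Arguments fmor {B C} l {a b} _.
Arguments fcell {B C} l {a b f g} _.
Arguments fcomp {B C} l {a b c} g f.
Arguments funit {B C} l a.

Record is_lax (B C : bicat_data) (F : lax_data B C) : Prop := {
  fcell_id : forall (a b : B) (f : hom a b), fcell F (id2 f) = id2 (fmor F f);
  fcell_comp : forall (a b : B) (f g h : hom a b) (β : cell g h) (α : cell f g),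
      fcell F (β • α) = fcell F β • fcell F α;
  fcomp_nat : forall (a b c : B) (g g' : hom b c) (f f' : hom a b) (β : cell g g') (α : cell f f'),
      fcomp F g' f' • (fcell F β ⋆ fcell F α) = fcell F (β ⋆ α) • fcomp F g f;
  lax_assoc : forall (a b c d : B) (h : hom c d) (g : hom b c) (f : hom a b),
      fcell F (assoc h g f) • fcomp F (h ⊚ g) f • (fcomp F h g ⋆ id2 (fmor F f))
      = fcomp F h (g ⊚ f) • (id2 (fmor F h) ⋆ fcomp F g f)
        • assoc (fmor F h) (fmor F g) (fmor F f);
  lax_lunit : forall (a b : B) (f : hom a b),
      fcell F (lunit f) • fcomp F (id1 b) f • (funit F b ⋆ id2 (fmor F f)) = lunit (fmor F f);
  lax_runit : forall (a b : B) (f : hom a b),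
      fcell F (runit f) • fcomp F f (id1 a) • (id2 (fmor F f) ⋆ funit F a) = runit (fmor F f)
}.

Record lax_functor (B C : bicat_data) : Type :=
  { lf_data :> lax_data B C; lf_ax : is_lax lf_data }.

Definition lid (B : bicat_data) : lax_data B B :=
  {| fob := fun a => a;
     fmor := fun a b f => f;
     fcell := fun a b f g α => α;
     fcomp := fun a b c g f => id2 (g ⊚ f);
     funit := fun a => id2 (id1 a) |}.

Definition lcomp (B C D : bicat_data) (G : lax_data C D) (F : lax_data B C) : lax_data B D :=
  {| fob := fun a => G (F a);
     fmor := fun a b f => fmor G (fmor F f);
     fcell := fun a b f g α => fcell G (fcell F α);
     fcomp := fun a b c g f => fcell G (fcomp F g f) • fcomp G (fmor F g) (fmor F f);
     funit := fun a => fcell G (funit F a) • funit G (F a) |}.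

Definition lconst (A D : bicat_data) (T : D) : lax_data A D :=
  {| fob := fun _ => T;
     fmor := fun _ _ _ => id1 T;
     fcell := fun _ _ _ _ _ => id2 (id1 T);
     fcomp := fun _ _ _ _ _ => lunit (id1 T);
     funit := fun _ => id2 (id1 T) |}.

(** * Lax transformations *)
Record ltrans (B C : bicat_data) (F G : lax_data B C) : Type := {
  tcomp : forall a : B, hom (F a) (G a);
  tnat : forall (a b : B) (f : hom a b), cell (fmor G f ⊚ tcomp a) (tcomp b ⊚ fmor F f)
}.
Arguments tcomp {B C F G} l a.
Arguments tnat {B C F G} l {a b} f.

Record is_ltrans (B C : bicat_data) (F G : lax_data B C) (t : ltrans F G) : Prop := {
  tnat_nat : forall (a b : B) (f f' : hom a b) (θ : cell f f'),
      (id2 (tcomp t b) ⋆ fcell F θ) • tnat t f = tnat t f' • (fcell G θ ⋆ id2 (tcomp t a));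
  tlax_unit : forall a : B,
      tnat t (id1 a) • (funit G a ⋆ id2 (tcomp t a))
      = (id2 (tcomp t a) ⋆ funit F a) • runit_inv (tcomp t a) • lunit (tcomp t a);
  tlax_nat : forall (a b c : B) (g : hom b c) (f : hom a b),
      tnat t (g ⊚ f) • (fcomp G g f ⋆ id2 (tcomp t a))
      = (id2 (tcomp t c) ⋆ fcomp F g f) • assoc (tcomp t c) (fmor F g) (fmor F f)
        • (tnat t g ⋆ id2 (fmor F f)) • assoc_inv (fmor G g) (tcomp t b) (fmor F f)
        • (id2 (fmor G g) ⋆ tnat t f) • assoc (fmor G g) (fmor G f) (tcomp t a)
}.

(** * Inc-lax terminal objects *)
Definition is_initial (D : bicat_data) (a b : D) (k : hom a b) : Prop :=
  forall g : hom a b, exists α : cell k g, forall β : cell k g, β = α.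

Record inc_lax_terminal (D : bicat_data) : Type := {
  ilt_ob : D;
  ilt_k : ltrans (lid D) (lconst D ilt_ob);
  ilt_k_lax : is_ltrans ilt_k;
  ilt_k_initial : forall Z : D, is_initial (tcomp ilt_k Z);
  ilt_k_id : tcomp ilt_k ilt_ob = id1 ilt_ob
}.

Definition preserves_initial_components (D E : bicat_data)
    (TD : inc_lax_terminal D) (TE : inc_lax_terminal E) (H : lax_data D E) : Prop :=
  forall Z : D,
    is_initial (tcomp (ilt_k TE) (H (ilt_ob TD)) ⊚ fmor H (tcomp (ilt_k TD) Z)).
Section SliceLemmas.
Context (B C : bicat_data) (HB : is_bicat B) (HC : is_bicat C) (F : lax_data B C) (HF : is_lax F).
Definition slc (X : C) (a b c : B) (fx : hom (F a) X) (fy : hom (F b) X) (fz : hom (F c) X)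
  (q : hom b c) (p : hom a b) (θq : cell fy (fz ⊚ fmor F q)) (θp : cell fx (fy ⊚ fmor F p))
  : cell fx (fz ⊚ fmor F (q ⊚ p)) :=
  (id2 fz ⋆ fcomp F q p) • assoc fz (fmor F q) (fmor F p) • (θq ⋆ id2 (fmor F p)) • θp.

Definition slid (X : C) (a : B) (f : hom (F a) X) : cell f (f ⊚ fmor F (id1 a)) :=
  (id2 f ⋆ funit F a) • runit_inv f.

Context (X : C).

Lemma sl_hcomp_ok (A0 A1 A2 : B) (f0 : hom (F A0) X) (f1 : hom (F A1) X) (f2 : hom (F A2) X)
  (p0 p0' : hom A0 A1) (θ0 : cell f0 (f1 ⊚ fmor F p0)) (θ0' : cell f0 (f1 ⊚ fmor F p0'))
  (α : cell p0 p0') (Hα : (id2 f1 ⋆ fcell F α) • θ0 = θ0')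
  (p1 p1' : hom A1 A2) (θ1 : cell f1 (f2 ⊚ fmor F p1)) (θ1' : cell f1 (f2 ⊚ fmor F p1'))
  (β : cell p1 p1') (Hβ : (id2 f2 ⋆ fcell F β) • θ1 = θ1') :
  (id2 f2 ⋆ fcell F (β ⋆ α)) • ((id2 f2 ⋆ fcomp F p1 p0) • assoc f2 (fmor F p1) (fmor F p0)
      • (θ1 ⋆ id2 (fmor F p0)) • θ0)
  = (id2 f2 ⋆ fcomp F p1' p0') • assoc f2 (fmor F p1') (fmor F p0')
      • (θ1' ⋆ id2 (fmor F p0')) • θ0'.
Proof.
  subst θ0' θ1'.
  repeat rewrite (vassoc HC).
  rewrite (hwl HC), <- (fcomp_nat HF), <- (hwl HC).
  rewrite (vpre HC (eq_sym (assoc_nat HC _ _ _))).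
  repeat rewrite (vassoc HC).
  rewrite (vpre HC (eq_sym (interchange HC (id2 f2 ⋆ fcell F β) θ1 (fcell F α) (id2 _)))), (vid_r HC).
  rewrite (hsplit1 HC (_ • θ1) (fcell F α)).
  rewrite !(vassoc HC). reflexivity.
Qed.

Lemma sl_id2_ok (a b : B) (fx : hom (F a) X) (fy : hom (F b) X) (p : hom a b)
  (θ : cell fx (fy ⊚ fmor F p)) : (id2 fy ⋆ fcell F (id2 p)) • θ = θ.
Proof. rewrite (fcell_id HF), (hid HC), (vid_l HC). reflexivity. Qed.

Lemma sl_vcomp_ok (a b : B) (fx : hom (F a) X) (fy : hom (F b) X) (p q r : hom a b)
  (θp : cell fx (fy ⊚ fmor F p)) (θq : cell fx (fy ⊚ fmor F q)) (θr : cell fx (fy ⊚ fmor F r))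
  (β : cell q r) (α : cell p q)
  (Hβ : (id2 fy ⋆ fcell F β) • θq = θr) (Hα : (id2 fy ⋆ fcell F α) • θp = θq) :
  (id2 fy ⋆ fcell F (β • α)) • θp = θr.
Proof.
  subst θr θq. rewrite (fcell_comp HF), <- (hwl HC), (vassoc HC). reflexivity.
Qed.

Lemma sl_inv_ok (a b : B) (fx : hom (F a) X) (fy : hom (F b) X) (p q : hom a b)
  (θp : cell fx (fy ⊚ fmor F p)) (θq : cell fx (fy ⊚ fmor F q))
  (α : cell p q) (α' : cell q p) (H : α' • α = id2 p)
  (Hα : (id2 fy ⋆ fcell F α) • θp = θq) :
  (id2 fy ⋆ fcell F α') • θq = θp.
Proof.
  subst θq. rewrite (vassoc HC), (hwl HC), <- (fcell_comp HF), H, (fcell_id HF), (hid HC), (vid_l HC).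
  reflexivity.
Qed.

Lemma sl_assoc_ok (A0 A1 A2 A3 : B) (f0 : hom (F A0) X) (f1 : hom (F A1) X)
  (f2 : hom (F A2) X) (f3 : hom (F A3) X)
  (p0 : hom A0 A1) (p1 : hom A1 A2) (p2 : hom A2 A3)
  (θ0 : cell f0 (f1 ⊚ fmor F p0)) (θ1 : cell f1 (f2 ⊚ fmor F p1)) (θ2 : cell f2 (f3 ⊚ fmor F p2)) :
  (id2 f3 ⋆ fcell F (assoc p2 p1 p0)) • slc (slc θ2 θ1) θ0 = slc θ2 (slc θ1 θ0).
Proof.
  unfold slc.
  rewrite <- !(hwr HC).
  repeat rewrite (vassoc HC).
  rewrite (hwl HC f3 (fcell F (assoc p2 p1 p0))).
  rewrite (vpre HC (assoc_nat HC (id2 f3) (fcomp F p2 p1) (id2 (fmor F p0)))).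
  repeat rewrite (vassoc HC).
  rewrite (hwl HC f3 (fcell F (assoc p2 p1 p0) • fcomp F (p2 ⊚ p1) p0)).
  rewrite (lax_assoc HF).
  rewrite <- (hwl HC f3 (fcomp F p2 (p1 ⊚ p0) • (id2 (fmor F p2) ⋆ fcomp F p1 p0))).
  rewrite <- (hwl HC f3 (fcomp F p2 (p1 ⊚ p0))).
  repeat rewrite (vassoc HC).
  rewrite (vpre3 HC (pentagon HC f3 (fmor F p2) (fmor F p1) (fmor F p0))).
  repeat rewrite (vassoc HC).
  rewrite (vpre HC (assoc_nat HC θ2 (id2 (fmor F p1)) (id2 (fmor F p0)))), (hid HC).
  rewrite (vpre HC (eq_sym (assoc_nat HC (id2 f3) (id2 (fmor F p2)) (fcomp F p1 p0)))), (hid HC).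
  repeat rewrite (vassoc HC).
  rewrite (vpre HC (eq_sym (hsplit2 HC θ2 (fcomp F p1 p0)))), (hsplit1 HC θ2 (fcomp F p1 p0)).
  rewrite !(vassoc HC). reflexivity.
Qed.

Lemma sl_lunit_ok (A0 A1 : B) (f0 : hom (F A0) X) (f1 : hom (F A1) X) (p : hom A0 A1)
  (θ : cell f0 (f1 ⊚ fmor F p)) :
  (id2 f1 ⋆ fcell F (lunit p)) • slc (slid f1) θ = θ.
Proof.
  unfold slc, slid.
  rewrite <- (hwr HC _ (id2 f1 ⋆ funit F A1)).
  repeat rewrite (vassoc HC).
  rewrite (hwl HC f1 (fcell F (lunit p))).
  rewrite (vpre HC (assoc_nat HC (id2 f1) (funit F A1) (id2 (fmor F p)))).
  repeat rewrite (vassoc HC).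
  rewrite (hwl HC f1 (fcell F (lunit p) • fcomp F (id1 A1) p)).
  rewrite (lax_lunit HF).
  rewrite (triangle HC), (hwr HC), (runit_iso1 HC), (hid HC), (vid_l HC).
  reflexivity.
Qed.

Lemma sl_runit_ok (A0 A1 : B) (f0 : hom (F A0) X) (f1 : hom (F A1) X) (p : hom A0 A1)
  (θ : cell f0 (f1 ⊚ fmor F p)) :
  (id2 f1 ⋆ fcell F (runit p)) • slc θ (slid f0) = θ.
Proof.
  unfold slc, slid.
  repeat rewrite (vassoc HC).
  rewrite (hwl HC f1 (fcell F (runit p))).
  rewrite (vpre HC (eq_sym (hsplit1 HC θ (funit F A0)))), (hsplit2 HC θ (funit F A0)).
  rewrite <- (hid HC f1 (fmor F p)).
  repeat rewrite (vassoc HC).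
  rewrite (vpre HC (assoc_nat HC (id2 f1) (id2 (fmor F p)) (funit F A0))).
  repeat rewrite (vassoc HC).
  rewrite (hwl HC f1 (fcell F (runit p) • fcomp F p (id1 A0))).
  rewrite (lax_runit HF).
  rewrite (kelly HC), (runit_nat HC), <- (vassoc HC), (runit_iso1 HC), (vid_r HC).
  reflexivity.
Qed.

Section ChangeOfSlice.
Context (Y : C) (u : hom X Y).

Lemma csl_cell_ok (a b : B) (fx : hom (F a) X) (fy : hom (F b) X) (p q : hom a b)
  (θp : cell fx (fy ⊚ fmor F p)) (θq : cell fx (fy ⊚ fmor F q))
  (α : cell p q) (Hα : (id2 fy ⋆ fcell F α) • θp = θq) :
  (id2 (u ⊚ fy) ⋆ fcell F α) • (assoc_inv u fy (fmor F p) • (id2 u ⋆ θp))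
  = assoc_inv u fy (fmor F q) • (id2 u ⋆ θq).
Proof.
  subst θq. rewrite <- (hid HC u fy).
  rewrite (vassoc HC), <- (assoc_inv_nat HC), <- (vassoc HC), (hwl HC). reflexivity.
Qed.

Lemma csl_unit_ok (a : B) (f : hom (F a) X) :
  (id2 (u ⊚ f) ⋆ fcell F (id2 (id1 a))) • slid (u ⊚ f)
  = assoc_inv u f (fmor F (id1 a)) • (id2 u ⋆ slid f).
Proof.
  unfold slid.
  rewrite (fcell_id HF), (hid HC), (vid_l HC).
  rewrite <- (hwl HC u (id2 f ⋆ funit F a)).
  rewrite (vassoc HC), (assoc_inv_nat HC), (hid HC).
  rewrite <- (vassoc HC), (kelly_inv HC). reflexivity.
Qed.

Lemma csl_comp_ok (a b c : B) (fx : hom (F a) X) (fy : hom (F b) X) (fz : hom (F c) X)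
  (q : hom b c) (p : hom a b) (θq : cell fy (fz ⊚ fmor F q)) (θp : cell fx (fy ⊚ fmor F p)) :
  (id2 (u ⊚ fz) ⋆ fcell F (id2 (q ⊚ p)))
    • slc (assoc_inv u fz (fmor F q) • (id2 u ⋆ θq)) (assoc_inv u fy (fmor F p) • (id2 u ⋆ θp))
  = assoc_inv u fz (fmor F (q ⊚ p)) • (id2 u ⋆ slc θq θp).
Proof.
  unfold slc.
  rewrite (fcell_id HF), (hid HC), (vid_l HC).
  rewrite <- (hwl HC u _ θp).
  rewrite <- (hwl HC u _ (θq ⋆ id2 (fmor F p))).
  rewrite <- (hwl HC u (id2 fz ⋆ fcomp F q p)).
  repeat rewrite (vassoc HC).
  rewrite (assoc_inv_nat HC (id2 u) (id2 fz) (fcomp F q p)), (hid HC u fz).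
  rewrite (vpre HC (pentagon_inv HC u fz (fmor F q) (fmor F p))).
  repeat rewrite (vassoc HC).
  rewrite (vpre HC (assoc_inv_nat HC (id2 u) θq (id2 (fmor F p)))).
  rewrite <- (hwr HC _ (assoc_inv u fz (fmor F q))).
  repeat rewrite (vassoc HC). reflexivity.
Qed.

End ChangeOfSlice.

End SliceLemmas.

(** * The lax slice bicategory [F ↓ X] and change-of-slice functors *)
Section Slice.
Context (B C : bicat) (F : lax_functor B C).

Definition sl_ob (X : C) : Type := { A : B & hom (F A) X }.

Definition sl_hom (X : C) (x y : sl_ob X) : Type :=
  { p : hom (projT1 x) (projT1 y) & cell (projT2 x) (projT2 y ⊚ fmor F p) }.

Definition sl_cell (X : C) (x y : sl_ob X) (p q : sl_hom x y) : Type :=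
  { α : cell (projT1 p) (projT1 q) | (id2 (projT2 y) ⋆ fcell F α) • projT2 p = projT2 q }.

Definition slice (X : C) : bicat_data :=
  {| ob := sl_ob X;
     hom := @sl_hom X;
     cell := @sl_cell X;
     id1 := fun x => existT _ (id1 (projT1 x)) (slid (projT2 x));
     comp1 := fun x y z q p => existT _ (projT1 q ⊚ projT1 p) (slc (projT2 q) (projT2 p));
     id2 := fun x y p => exist _ (id2 (projT1 p)) (sl_id2_ok (bc_ax C) (lf_ax F) (projT2 p));
     vcomp := fun x y p q r β α =>
       exist _ (proj1_sig β • proj1_sig α)
         (sl_vcomp_ok (bc_ax C) (lf_ax F) (proj2_sig β) (proj2_sig α));
     hcomp := fun x y z f f' g g' β α =>
       exist _ (proj1_sig β ⋆ proj1_sig α)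
         (sl_hcomp_ok (bc_ax C) (lf_ax F) (proj2_sig α) (proj2_sig β));
     assoc := fun w x y z r q p =>
       exist _ (assoc (projT1 r) (projT1 q) (projT1 p))
         (sl_assoc_ok (bc_ax C) (lf_ax F) (projT2 p) (projT2 q) (projT2 r));
     assoc_inv := fun w x y z r q p =>
       exist _ (assoc_inv (projT1 r) (projT1 q) (projT1 p))
         (sl_inv_ok (bc_ax C) (lf_ax F) (assoc_iso2 (bc_ax B) _ _ _)
            (sl_assoc_ok (bc_ax C) (lf_ax F) (projT2 p) (projT2 q) (projT2 r)));
     lunit := fun x y p =>
       exist _ (lunit (projT1 p)) (sl_lunit_ok (bc_ax C) (lf_ax F) (projT2 p));
     lunit_inv := fun x y p =>
       exist _ (lunit_inv (projT1 p))
         (sl_inv_ok (bc_ax C) (lf_ax F) (lunit_iso2 (bc_ax B) _)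
            (sl_lunit_ok (bc_ax C) (lf_ax F) (projT2 p)));
     runit := fun x y p =>
       exist _ (runit (projT1 p)) (sl_runit_ok (bc_ax C) (lf_ax F) (projT2 p));
     runit_inv := fun x y p =>
       exist _ (runit_inv (projT1 p))
         (sl_inv_ok (bc_ax C) (lf_ax F) (runit_iso2 (bc_ax B) _)
            (sl_runit_ok (bc_ax C) (lf_ax F) (projT2 p))) |}.

Definition change_slice (X Y : C) (u : hom X Y) : lax_data (slice X) (slice Y) :=
  {| fob := fun (x : slice X) => (existT _ (projT1 x) (u ⊚ projT2 x) : slice Y);
     fmor := fun x y p =>
       existT _ (projT1 p) (assoc_inv u (projT2 y) (fmor F (projT1 p)) • (id2 u ⋆ projT2 p));
     fcell := fun x y p q α =>
       exist _ (proj1_sig α) (csl_cell_ok (bc_ax C) u (proj2_sig α));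
     fcomp := fun x y z q p =>
       exist _ (id2 (projT1 q ⊚ projT1 p))
         (csl_comp_ok (bc_ax C) (lf_ax F) u (projT2 q) (projT2 p));
     funit := fun x =>
       exist _ (id2 (id1 (projT1 x))) (csl_unit_ok (bc_ax C) (lf_ax F) u (projT2 x)) |}.

End Slice.

(** The quasi-inverse [G] is read off from the inc-lax terminal objects: [G X] is
    the base [X̄] of the terminal object [(X̄, f_X̄)] of [F ↓ X], and for [u : X -> Y]
    the 1-cell [G u] is the base of the initial 1-cell [(X̄, u f_X̄) -> (Ȳ, f_Ȳ)]
    of [F ↓ Y], whose triangle [u f_X̄ ⇒ f_Ȳ F(G u)] is the component of [ε] at [u].
    Every further 2-cell ([G] on 2-cells, the lax constraints of [G], the components
    of [η]) is the unique 2-cell of a slice out of some initial 1-cell, and every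
    axiom is an equation between two such 2-cells, which holds by uniqueness.  The
    1-cells used as sources that are not initial by construction are composites
    [(G v, ε_v) ∘ (F↓v)(p, θ)] with [(p, θ)] initial; that these are initial is
    exactly what preservation of initial components by [F ↓ v] provides.
    [η_A] is the base of the initial 1-cell out of [(A, 1_{FA})] in [F ↓ FA]. *)

From Stdlib Require Import IndefiniteDescription.
Open Scope bicat_scope.

Section Coherence.
Context {B : bicat_data} (HB : is_bicat B).

Lemma vcomp_cancel_r {a b : B} {e f g : hom a b} {x y : cell f g}
  (i : cell e f) (j : cell f e) :
  i • j = id2 f -> x • i = y • i -> x = y.
Proof.
  intros Hi E.
  rewrite <- (vid_r HB x), <- (vid_r HB y), <- Hi, !(vassoc HB), E. reflexivity.
Qed.

Lemma vcomp_cancel_l {a b : B} {f g h : hom a b} {x y : cell f g}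
  (i : cell g h) (j : cell h g) :
  j • i = id2 g -> i • x = i • y -> x = y.
Proof.
  intros Hi E.
  rewrite <- (vid_l HB x), <- (vid_l HB y), <- Hi, <- !(vassoc HB), E. reflexivity.
Qed.

Lemma lunit_inv_nat {a b : B} {f f' : hom a b} (α : cell f f') :
  (id2 (id1 b) ⋆ α) • lunit_inv f = lunit_inv f' • α.
Proof.
  apply (vcomp_cancel_l (lunit f') (lunit_inv f')); [apply (lunit_iso2 HB)|].
  rewrite !(vassoc HB), (lunit_nat HB), (lunit_iso1 HB), <- (vassoc HB), (lunit_iso1 HB).
  rewrite (vid_l HB), (vid_r HB). reflexivity.
Qed.

Lemma lwhisker_id1_inj {a b : B} {f g : hom a b} (α β : cell f g) :
  id2 (id1 b) ⋆ α = id2 (id1 b) ⋆ β -> α = β.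
Proof.
  intros E.
  assert (Hx : forall γ : cell f g, γ = lunit g • (id2 (id1 b) ⋆ γ) • lunit_inv f).
  { intros γ. rewrite (lunit_nat HB), <- (vassoc HB), (lunit_iso1 HB), (vid_r HB). reflexivity. }
  rewrite (Hx α), (Hx β), E. reflexivity.
Qed.

Lemma lunit_assoc {a b c : B} (g : hom b c) (f : hom a b) :
  lunit (g ⊚ f) • assoc (id1 c) g f = lunit g ⋆ id2 f.
Proof.
  apply lwhisker_id1_inj.
  apply (vcomp_cancel_r (assoc (id1 c) (id1 c ⊚ g) f) (assoc_inv _ _ _));
    [apply (assoc_iso1 HB)|].
  apply (vcomp_cancel_r (assoc (id1 c) (id1 c) g ⋆ id2 f) (assoc_inv (id1 c) (id1 c) g ⋆ id2 f)).
  { rewrite (hwr HB), (assoc_iso1 HB), (hid HB). reflexivity. }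
  rewrite <- (hwl HB), (vpre3 HB (pentagon HB (id1 c) (id1 c) g f)).
  rewrite (vassoc HB), (triangle HB).
  rewrite <- (assoc_nat HB), <- (vassoc HB), (hwr HB), (triangle HB).
  rewrite (assoc_nat HB), (hid HB). reflexivity.
Qed.

Lemma lunit_assoc_inv {a b c : B} (g : hom b c) (f : hom a b) :
  (lunit g ⋆ id2 f) • assoc_inv (id1 c) g f = lunit (g ⊚ f).
Proof.
  rewrite <- lunit_assoc, <- (vassoc HB), (assoc_iso1 HB), (vid_r HB). reflexivity.
Qed.

Lemma assoc_inv_lunit_inv {a b c : B} (g : hom b c) (f : hom a b) :
  assoc_inv (id1 c) g f • lunit_inv (g ⊚ f) = lunit_inv g ⋆ id2 f.
Proof.
  apply (vcomp_cancel_l (lunit g ⋆ id2 f) (lunit_inv g ⋆ id2 f)).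
  { rewrite (hwr HB), (lunit_iso2 HB), (hid HB). reflexivity. }
  rewrite (vassoc HB), lunit_assoc_inv, (lunit_iso1 HB), (hwr HB), (lunit_iso1 HB), (hid HB).
  reflexivity.
Qed.

Lemma triangle_inv {a b c : B} (g : hom b c) (f : hom a b) :
  (runit g ⋆ id2 f) • assoc_inv g (id1 b) f = id2 g ⋆ lunit f.
Proof.
  rewrite <- (triangle HB), <- (vassoc HB), (assoc_iso1 HB), (vid_r HB). reflexivity.
Qed.

Lemma lunit_runit (a : B) : lunit (id1 a) = runit (id1 a).
Proof.
  apply lwhisker_id1_inj.
  apply (vcomp_cancel_r (assoc (id1 a) (id1 a) (id1 a)) (assoc_inv _ _ _));
    [apply (assoc_iso1 HB)|].
  rewrite (triangle HB), (kelly HB).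
  apply (vcomp_cancel_l (runit (id1 a)) (runit_inv (id1 a))); [apply (runit_iso2 HB)|].
  rewrite (runit_nat HB). reflexivity.
Qed.

Lemma runit_inv_lunit_inv (a : B) : runit_inv (id1 a) = lunit_inv (id1 a).
Proof.
  rewrite <- (vid_l HB (runit_inv _)), <- (lunit_iso2 HB (id1 a)), <- (vassoc HB).
  rewrite lunit_runit, (runit_iso1 HB), (vid_r HB). reflexivity.
Qed.

Lemma pentagon_assoc_inv {a b c d e : B} (h : hom d e) (g : hom c d) (f : hom b c) (x : hom a b) :
  (assoc_inv h g f ⋆ id2 x) • assoc_inv h (g ⊚ f) x • (id2 h ⋆ assoc_inv g f x)
  = assoc_inv (h ⊚ g) f x • assoc_inv h g (f ⊚ x).
Proof.
  apply (vcomp_cancel_r (id2 h ⋆ assoc g f x) (id2 h ⋆ assoc_inv g f x)).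
  { rewrite (hwl HB), (assoc_iso1 HB), (hid HB). reflexivity. }
  rewrite <- (vassoc HB), (hwl HB), (assoc_iso2 HB), (hid HB), (vid_r HB).
  rewrite <- (vassoc HB _ (assoc_inv h g (f ⊚ x))), (pentagon_inv HB).
  rewrite !(vassoc HB), (assoc_iso2 HB), (vid_l HB). reflexivity.
Qed.

Lemma pentagon_assoc_inv_r {a b c d e : B} (h : hom d e) (g : hom c d) (f : hom b c) (x : hom a b) :
  (assoc h g f ⋆ id2 x) • assoc_inv (h ⊚ g) f x • assoc_inv h g (f ⊚ x)
  = assoc_inv h (g ⊚ f) x • (id2 h ⋆ assoc_inv g f x).
Proof.
  rewrite <- (vassoc HB), <- pentagon_assoc_inv, !(vassoc HB), (hwr HB), (assoc_iso1 HB).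
  rewrite (hid HB), (vid_l HB). reflexivity.
Qed.

End Coherence.

Section SliceCalculus.
Context {B C : bicat} {F : lax_functor B C}.

Let HB := bc_ax B.
Let HC := bc_ax C.
Let HF := lf_ax F.

Definition is_slice_cell {Y : C} {A A1 : B} {a : hom (F A) Y} {f1 : hom (F A1) Y}
  {p q : hom A A1} (α : cell p q) (θ : cell a (f1 ⊚ fmor F p)) (φ : cell a (f1 ⊚ fmor F q))
  : Prop :=
  (id2 f1 ⋆ fcell F α) • θ = φ.

Definition csl {X Y : C} (u : hom X Y) {A A1 : B} {a : hom (F A) X} {f1 : hom (F A1) X}
  {p : hom A A1} (θ : cell a (f1 ⊚ fmor F p)) : cell (u ⊚ a) ((u ⊚ f1) ⊚ fmor F p) :=
  assoc_inv u f1 (fmor F p) • (id2 u ⋆ θ).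

Section SliceCells.
Context {Y : C}.

Lemma slice_cell_id {A A1 : B} {a : hom (F A) Y} {f1 : hom (F A1) Y} {p : hom A A1}
  (θ : cell a (f1 ⊚ fmor F p)) : is_slice_cell (id2 p) θ θ.
Proof. exact (sl_id2_ok HC HF θ). Qed.

Lemma slice_cell_id_eq {A A1 : B} {a : hom (F A) Y} {f1 : hom (F A1) Y} {p : hom A A1}
  (θ φ : cell a (f1 ⊚ fmor F p)) : is_slice_cell (id2 p) θ φ -> θ = φ.
Proof. unfold is_slice_cell. rewrite (fcell_id HF), (hid HC), (vid_l HC). auto. Qed.

Lemma slice_cell_vcomp {A A1 : B} {a : hom (F A) Y} {f1 : hom (F A1) Y} {p q r : hom A A1}
  {β : cell q r} {α : cell p q} {θ1 θ2 θ3} :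
  is_slice_cell (a:=a) (f1:=f1) β θ2 θ3 -> is_slice_cell α θ1 θ2 ->
  is_slice_cell (β • α) θ1 θ3.
Proof. intros H1 H2. exact (sl_vcomp_ok HC HF H1 H2). Qed.

Lemma slice_cell_precomp {A A1 : B} {a a' : hom (F A) Y} {f1 : hom (F A1) Y} {p q : hom A A1}
  {α : cell p q} {θ φ} (ι : cell a' a) :
  is_slice_cell (a:=a) (f1:=f1) α θ φ -> is_slice_cell α (θ • ι) (φ • ι).
Proof. unfold is_slice_cell. intros H. rewrite (vassoc HC), H. reflexivity. Qed.

Lemma slice_cell_hcomp {A0 A1 A2 : B} {f0 : hom (F A0) Y} {f1 : hom (F A1) Y}
  {f2 : hom (F A2) Y} {p0 p0' : hom A0 A1} {θ0 : cell f0 (f1 ⊚ fmor F p0)}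
  {θ0' : cell f0 (f1 ⊚ fmor F p0')} {α : cell p0 p0'} {p1 p1' : hom A1 A2}
  {θ1 : cell f1 (f2 ⊚ fmor F p1)} {θ1' : cell f1 (f2 ⊚ fmor F p1')} {β : cell p1 p1'} :
  is_slice_cell α θ0 θ0' -> is_slice_cell β θ1 θ1' ->
  is_slice_cell (β ⋆ α) (slc θ1 θ0) (slc θ1' θ0').
Proof. intros H1 H2. exact (sl_hcomp_ok HC HF H1 H2). Qed.

Lemma slice_cell_cod_eq {A A1 : B} {a : hom (F A) Y} {f1 : hom (F A1) Y} {p q : hom A A1}
  {α : cell p q} {θ : cell a (f1 ⊚ fmor F p)} {φ φ' : cell a (f1 ⊚ fmor F q)} :
  is_slice_cell α θ φ -> φ = φ' -> is_slice_cell α θ φ'.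
Proof. intros H <-. exact H. Qed.

Lemma slice_cell_assoc {A0 A1 A2 A3 : B} {f0 : hom (F A0) Y} {f1 : hom (F A1) Y}
  {f2 : hom (F A2) Y} {f3 : hom (F A3) Y} {p0 : hom A0 A1} {p1 : hom A1 A2} {p2 : hom A2 A3}
  (θ0 : cell f0 (f1 ⊚ fmor F p0)) (θ1 : cell f1 (f2 ⊚ fmor F p1))
  (θ2 : cell f2 (f3 ⊚ fmor F p2)) :
  is_slice_cell (assoc p2 p1 p0) (slc (slc θ2 θ1) θ0) (slc θ2 (slc θ1 θ0)).
Proof. exact (sl_assoc_ok HC HF θ0 θ1 θ2). Qed.

Lemma slice_cell_assoc_inv {A0 A1 A2 A3 : B} {f0 : hom (F A0) Y} {f1 : hom (F A1) Y}
  {f2 : hom (F A2) Y} {f3 : hom (F A3) Y} {p0 : hom A0 A1} {p1 : hom A1 A2} {p2 : hom A2 A3}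
  (θ0 : cell f0 (f1 ⊚ fmor F p0)) (θ1 : cell f1 (f2 ⊚ fmor F p1))
  (θ2 : cell f2 (f3 ⊚ fmor F p2)) :
  is_slice_cell (assoc_inv p2 p1 p0) (slc θ2 (slc θ1 θ0)) (slc (slc θ2 θ1) θ0).
Proof. exact (sl_inv_ok HC HF (assoc_iso2 HB _ _ _) (sl_assoc_ok HC HF θ0 θ1 θ2)). Qed.

Lemma slice_cell_lunit {A0 A1 : B} {f0 : hom (F A0) Y} {f1 : hom (F A1) Y} {p : hom A0 A1}
  (θ : cell f0 (f1 ⊚ fmor F p)) : is_slice_cell (lunit p) (slc (slid f1) θ) θ.
Proof. exact (sl_lunit_ok HC HF θ). Qed.

Lemma slice_cell_lunit_inv {A0 A1 : B} {f0 : hom (F A0) Y} {f1 : hom (F A1) Y} {p : hom A0 A1}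
  (θ : cell f0 (f1 ⊚ fmor F p)) : is_slice_cell (lunit_inv p) θ (slc (slid f1) θ).
Proof. exact (sl_inv_ok HC HF (lunit_iso2 HB _) (sl_lunit_ok HC HF θ)). Qed.

Lemma slice_cell_runit {A0 A1 : B} {f0 : hom (F A0) Y} {f1 : hom (F A1) Y} {p : hom A0 A1}
  (θ : cell f0 (f1 ⊚ fmor F p)) : is_slice_cell (runit p) (slc θ (slid f0)) θ.
Proof. exact (sl_runit_ok HC HF θ). Qed.

Lemma slice_cell_runit_inv {A0 A1 : B} {f0 : hom (F A0) Y} {f1 : hom (F A1) Y} {p : hom A0 A1}
  (θ : cell f0 (f1 ⊚ fmor F p)) : is_slice_cell (runit_inv p) θ (slc θ (slid f0)).
Proof. exact (sl_inv_ok HC HF (runit_iso2 HB _) (sl_runit_ok HC HF θ)). Qed.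

Lemma slice_cell_csl {Z : C} (u : hom Y Z) {A A1 : B} {a : hom (F A) Y} {f1 : hom (F A1) Y}
  {p q : hom A A1} {α : cell p q} {θ φ} :
  is_slice_cell (a:=a) (f1:=f1) α θ φ -> is_slice_cell α (csl u θ) (csl u φ).
Proof. intros H. exact (csl_cell_ok HC u H). Qed.

End SliceCells.

Lemma slc_precomp {Y : C} {A A1 A2 : B} {a a' : hom (F A) Y}
  {fy : hom (F A1) Y} {fz : hom (F A2) Y} {q : hom A1 A2} {p : hom A A1}
  (θq : cell fy (fz ⊚ fmor F q)) (θp : cell a' (fy ⊚ fmor F p)) (ι : cell a a') :
  slc θq (θp • ι) = slc θq θp • ι.
Proof. unfold slc. rewrite !(vassoc HC). reflexivity. Qed.

Lemma csl_precomp {X Y : C} (u : hom X Y) {A A1 : B} {a a' : hom (F A) X} {f1 : hom (F A1) X}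
  {p : hom A A1} (θ : cell a (f1 ⊚ fmor F p)) (ι : cell a' a) :
  csl u (θ • ι) = csl u θ • (id2 u ⋆ ι).
Proof. unfold csl. rewrite <- (hwl HC), !(vassoc HC). reflexivity. Qed.

Lemma csl_slc {X Y : C} (u : hom X Y) {a b c : B} {fx : hom (F a) X} {fy : hom (F b) X}
  {fz : hom (F c) X} {q : hom b c} {p : hom a b}
  (θq : cell fy (fz ⊚ fmor F q)) (θp : cell fx (fy ⊚ fmor F p)) :
  csl u (slc θq θp) = slc (csl u θq) (csl u θp).
Proof. apply eq_sym, slice_cell_id_eq. exact (csl_comp_ok HC HF u θq θp). Qed.

Lemma csl_slid {X Y : C} (u : hom X Y) {a : B} (f : hom (F a) X) :
  csl u (slid f) = slid (u ⊚ f).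
Proof. apply eq_sym, slice_cell_id_eq. exact (csl_unit_ok HC HF u f). Qed.

Lemma slc_csl_whisker {X Y : C} {u u' : hom X Y} (β : cell u u') {A A1 A2 : B}
  {a : hom (F A) X} {fY : hom (F A1) X} {fZ : hom (F A2) Y} {q : hom A1 A2} {p : hom A A1}
  (θq : cell (u' ⊚ fY) (fZ ⊚ fmor F q)) (θp : cell a (fY ⊚ fmor F p)) :
  slc (θq • (β ⋆ id2 fY)) (csl u θp) = slc θq (csl u' θp) • (β ⋆ id2 a).
Proof.
  unfold slc, csl.
  rewrite <- (hwr HC _ θq (β ⋆ id2 fY)), !(vassoc HC).
  rewrite (vpre HC (eq_sym (assoc_inv_nat HC β (id2 fY) (id2 (fmor F p))))), (hid HC).
  rewrite !(vassoc HC), (vpre HC (eq_sym (hsplit1 HC β θp))), (hsplit2 HC β θp).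
  rewrite !(vassoc HC). reflexivity.
Qed.

Lemma slc_csl_comp {Y Z W : C} (h : hom Z W) (g : hom Y Z) {A A1 A2 : B}
  {a : hom (F A) Y} {fY : hom (F A1) Y} {fW : hom (F A2) W} {q : hom A1 A2} {p : hom A A1}
  (θq : cell ((h ⊚ g) ⊚ fY) (fW ⊚ fmor F q)) (θp : cell a (fY ⊚ fmor F p)) :
  slc (θq • assoc_inv h g fY) (csl h (csl g θp)) = slc θq (csl (h ⊚ g) θp) • assoc_inv h g a.
Proof.
  unfold slc, csl.
  rewrite <- (hwr HC _ θq (assoc_inv h g fY)), <- (hwl HC h (assoc_inv g fY (fmor F p))).
  rewrite !(vassoc HC), (vpre3 HC (pentagon_assoc_inv HC h g fY (fmor F p))).
  rewrite !(vassoc HC), (vpre HC (assoc_inv_nat HC (id2 h) (id2 g) θp)), (hid HC).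
  rewrite !(vassoc HC). reflexivity.
Qed.

Lemma slc_csl_id {Y : C} {A A1 A2 : B} {a : hom (F A) Y} {fY : hom (F A1) Y}
  {fZ : hom (F A2) Y} {q : hom A1 A2} {p : hom A A1}
  (θq : cell (id1 Y ⊚ fY) (fZ ⊚ fmor F q)) (θp : cell a (fY ⊚ fmor F p)) :
  slc (θq • lunit_inv fY) θp = slc θq (csl (id1 Y) θp) • lunit_inv a.
Proof.
  unfold slc, csl.
  rewrite <- (hwr HC _ θq (lunit_inv fY)), !(vassoc HC).
  rewrite <- (vassoc HC _ _ (lunit_inv a)), (lunit_inv_nat HC θp).
  rewrite !(vassoc HC), (vpre HC (assoc_inv_lunit_inv HC fY (fmor F p))). reflexivity.
Qed.

(** The triangle of the 1-cell [(f, _) : (A, F f ∘ 1) -> (A', 1)] of [F ↓ F A']. *)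
Definition unitor_swap {A A' : B} (f : hom A A') :
  cell (fmor F f ⊚ id1 (F A)) (id1 (F A') ⊚ fmor F f) :=
  lunit_inv (fmor F f) • runit (fmor F f).

Lemma slice_cell_unitor_swap {A A' : B} {f f' : hom A A'} (θ : cell f f') :
  is_slice_cell θ (unitor_swap f) (unitor_swap f' • (fcell F θ ⋆ id2 (id1 (F A)))).
Proof.
  unfold is_slice_cell, unitor_swap.
  rewrite (vassoc HC), (lunit_inv_nat HC), <- !(vassoc HC), (runit_nat HC). reflexivity.
Qed.

Lemma unitor_swap_id (A : B) :
  unitor_swap (id1 A) • (funit F A ⋆ id2 (id1 (F A))) • lunit_inv (id1 (F A))
  = slid (id1 (F A)).
Proof.
  unfold unitor_swap, slid.
  rewrite <- (vassoc HC (lunit_inv _) (runit _)), (runit_nat HC), <- (lunit_runit HC).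
  rewrite !(vassoc HC), <- (vassoc HC _ (lunit _)), (lunit_iso1 HC), (vid_r HC).
  rewrite (runit_inv_lunit_inv HC), (lunit_inv_nat HC). reflexivity.
Qed.

Lemma unitor_swap_comp {A1 A2 A3 : B} (g : hom A2 A3) (f : hom A1 A2) :
  slc (unitor_swap g) (csl (fmor F g) (unitor_swap f))
  = unitor_swap (g ⊚ f) • (fcomp F g f ⋆ id2 (id1 (F A1)))
    • assoc_inv (fmor F g) (fmor F f) (id1 (F A1)).
Proof.
  apply (vcomp_cancel_l HC (lunit _) (lunit_inv _)); [apply (lunit_iso2 HC)|].
  unfold slc, csl, unitor_swap.
  rewrite !(vassoc HC (lunit _)), (lunit_iso1 HC), (vid_l HC).
  rewrite (runit_nat HC), <- (vassoc HC (fcomp F g f)).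
  rewrite <- (kelly HC (fmor F g) (fmor F f)), <- (vassoc HC (id2 _ ⋆ runit _) (assoc _ _ _)).
  rewrite (assoc_iso1 HC), (vid_r HC).
  rewrite !(vassoc HC), (lunit_nat HC), <- (vassoc HC (fcomp F g f)), (lunit_assoc HC).
  rewrite <- (vassoc HC (fcomp F g f)), (hwr HC), (vassoc HC (lunit _)), (lunit_iso1 HC).
  rewrite (vid_l HC), (vpre HC (triangle_inv HC _ _)).
  rewrite <- !(vassoc HC), (hwl HC), (vassoc HC (lunit _)), (lunit_iso1 HC), (vid_l HC).
  reflexivity.
Qed.

(** [θ] is the triangle of an initial object of the hom-category [F ↓ Y ((A, a), (A1, f1))]. *)
Definition is_initial_sl {Y : C} {A A1 : B} {a : hom (F A) Y} {f1 : hom (F A1) Y}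
  {p : hom A A1} (θ : cell a (f1 ⊚ fmor F p)) : Prop :=
  forall q (φ : cell a (f1 ⊚ fmor F q)),
    exists α : cell p q, is_slice_cell α θ φ /\ forall β, is_slice_cell β θ φ -> β = α.

Lemma is_initial_sl_of_initial {Y : C} {V W : sl_ob F Y} (s : sl_hom V W) :
  @is_initial (slice F Y) V W s -> is_initial_sl (projT2 s).
Proof.
  intros H q φ.
  destruct (H (existT _ q φ)) as [α Hα].
  exists (proj1_sig α). split; [exact (proj2_sig α)|].
  intros β Hβ. exact (f_equal (@proj1_sig _ _) (Hα (exist _ β Hβ))).
Qed.

Section InitialSliceCells.
Context {Y : C} {A A1 : B} {a : hom (F A) Y} {f1 : hom (F A1) Y}.

Lemma initial_slice_cell_unique {p : hom A A1} {θ : cell a (f1 ⊚ fmor F p)}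
  (H : is_initial_sl θ) {q} {φ : cell a (f1 ⊚ fmor F q)} (α β : cell p q) :
  is_slice_cell α θ φ -> is_slice_cell β θ φ -> α = β.
Proof.
  intros H1 H2. destruct (H q φ) as [γ [_ Hγ]]. rewrite (Hγ α H1), (Hγ β H2). reflexivity.
Qed.

Lemma is_initial_sl_iso {p p' : hom A A1}
  {θ1 : cell a (f1 ⊚ fmor F p)} {θ2 : cell a (f1 ⊚ fmor F p')} (τ : cell p' p) (σ : cell p p') :
  is_initial_sl θ1 -> is_slice_cell τ θ2 θ1 -> is_slice_cell σ θ1 θ2 -> σ • τ = id2 p' ->
  is_initial_sl θ2.
Proof.
  intros H Hτ Hσ E q φ.
  destruct (H q φ) as [α [Hα U]].
  exists (α • τ). split; [exact (slice_cell_vcomp Hα Hτ)|].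
  intros β Hβ.
  rewrite <- (vid_r HB β), <- E, (vassoc HB), (U (β • σ) (slice_cell_vcomp Hβ Hσ)). reflexivity.
Qed.

Lemma initial_sl_iso {p p' : hom A A1}
  {θ1 : cell a (f1 ⊚ fmor F p)} {θ2 : cell a (f1 ⊚ fmor F p')} :
  is_initial_sl θ1 -> is_initial_sl θ2 -> exists (σ : cell p p') (τ : cell p' p),
    is_slice_cell σ θ1 θ2 /\ is_slice_cell τ θ2 θ1 /\ σ • τ = id2 p'.
Proof.
  intros H1 H2.
  destruct (H1 p' θ2) as [σ [Hσ _]].
  destruct (H2 p θ1) as [τ [Hτ _]].
  exists σ, τ. split; [exact Hσ|]. split; [exact Hτ|].
  apply (initial_slice_cell_unique H2 (φ := θ2)).
  - exact (slice_cell_vcomp Hσ Hτ).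
  - apply slice_cell_id.
Qed.

Lemma initial_slice_cell_ex {p : hom A A1} {θ : cell a (f1 ⊚ fmor F p)}
  (H : is_initial_sl θ) q (φ : cell a (f1 ⊚ fmor F q)) :
  exists α : cell p q, is_slice_cell α θ φ.
Proof. destruct (H q φ) as [α [Hα _]]. eauto. Qed.

Definition initial_slice_cell {p : hom A A1} {θ : cell a (f1 ⊚ fmor F p)}
  (H : is_initial_sl θ) q (φ : cell a (f1 ⊚ fmor F q)) : cell p q :=
  proj1_sig (constructive_indefinite_description _ (initial_slice_cell_ex H q φ)).

Lemma initial_slice_cellP {p : hom A A1} {θ : cell a (f1 ⊚ fmor F p)}
  (H : is_initial_sl θ) q (φ : cell a (f1 ⊚ fmor F q)) :
  is_slice_cell (initial_slice_cell H q φ) θ φ.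
Proof. exact (proj2_sig (constructive_indefinite_description _ (initial_slice_cell_ex H q φ))). Qed.

End InitialSliceCells.

Section QuasiInverse.
Context (T : forall X : C, inc_lax_terminal (slice F X))
  (Hpres : forall (X Y : C) (u : hom X Y),
      preserves_initial_components (T X) (T Y) (change_slice F u)).

Definition Gob (X : C) : B := projT1 (ilt_ob (T X)).
Definition fbar (X : C) : hom (F (Gob X)) X := projT2 (ilt_ob (T X)).

Definition to_term (Y : C) (V : sl_ob F Y) : sl_hom V (ilt_ob (T Y)) := tcomp (ilt_k (T Y)) V.

Lemma to_term_initial (Y : C) (V : sl_ob F Y) : is_initial_sl (projT2 (to_term Y V)).
Proof. exact (is_initial_sl_of_initial _ (@ilt_k_initial _ (T Y) V)). Qed.

Definition Gmor {X Y : C} (u : hom X Y) : hom (Gob X) (Gob Y) :=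
  projT1 (to_term Y (existT _ (Gob X) (u ⊚ fbar X))).
Definition fbar_nat {X Y : C} (u : hom X Y) : cell (u ⊚ fbar X) (fbar Y ⊚ fmor F (Gmor u)) :=
  projT2 (to_term Y (existT _ (Gob X) (u ⊚ fbar X))).

Lemma fbar_nat_initial {X Y : C} (u : hom X Y) : is_initial_sl (fbar_nat u).
Proof. exact (to_term_initial Y (existT _ (Gob X) (u ⊚ fbar X))). Qed.

Lemma slid_fbar_initial (X : C) : is_initial_sl (slid (fbar X)).
Proof.
  pose proof (@ilt_k_initial _ (T X) (ilt_ob (T X))) as H.
  rewrite (ilt_k_id (T X)) in H.
  exact (is_initial_sl_of_initial _ H).
Qed.

(** Any initial 1-cell into the terminal object of [F ↓ Y] is isomorphic to the
    component of [k^Y] at its source, whose image under [F ↓ u] followed by the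
    component of [k^Z] is initial by hypothesis. *)
Lemma slc_csl_initial {Y Z : C} (u : hom Y Z) {A : B} {a : hom (F A) Y} {p : hom A (Gob Y)}
  (θ : cell a (fbar Y ⊚ fmor F p)) :
  is_initial_sl θ -> is_initial_sl (slc (fbar_nat u) (csl u θ)).
Proof.
  intros H.
  pose (V := existT (fun A => hom (F A) Y) A a : sl_ob F Y).
  assert (Hk : is_initial_sl (slc (fbar_nat u) (csl u (projT2 (to_term Y V)))))
    by exact (is_initial_sl_of_initial _ (Hpres Y Z u V)).
  destruct (initial_sl_iso (to_term_initial Y V) H) as [σ [τ [Hσ [Hτ E]]]].
  apply (is_initial_sl_iso (id2 (Gmor u) ⋆ τ) (id2 (Gmor u) ⋆ σ) Hk).
  - exact (slice_cell_hcomp (slice_cell_csl u Hτ) (slice_cell_id (fbar_nat u))).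
  - exact (slice_cell_hcomp (slice_cell_csl u Hσ) (slice_cell_id (fbar_nat u))).
  - rewrite (hwl HB), <- (hid HB). f_equal. exact E.
Qed.

Lemma slc_csl_initial2 {Y Z W : C} (h : hom Z W) (g : hom Y Z) {A : B} {a : hom (F A) Y}
  {p : hom A (Gob Y)} (θ : cell a (fbar Y ⊚ fmor F p)) :
  is_initial_sl θ -> is_initial_sl (slc (slc (fbar_nat h) (csl h (fbar_nat g))) (csl h (csl g θ))).
Proof.
  intros H.
  pose proof (slc_csl_initial h _ (slc_csl_initial g θ H)) as H2.
  rewrite csl_slc in H2.
  apply (is_initial_sl_iso (assoc _ _ _) (assoc_inv _ _ _) H2).
  - apply slice_cell_assoc.
  - apply slice_cell_assoc_inv.
  - apply (assoc_iso2 HB).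
Qed.

Definition Gcell {X Y : C} {u v : hom X Y} (α : cell u v) : cell (Gmor u) (Gmor v) :=
  initial_slice_cell (fbar_nat_initial u) (Gmor v) (fbar_nat v • (α ⋆ id2 (fbar X))).
Definition Gcomp {X Y Z : C} (v : hom Y Z) (u : hom X Y) : cell (Gmor v ⊚ Gmor u) (Gmor (v ⊚ u)) :=
  initial_slice_cell (slc_csl_initial v (fbar_nat u) (fbar_nat_initial u)) (Gmor (v ⊚ u))
    (fbar_nat (v ⊚ u) • assoc_inv v u (fbar X)).
Definition Gunit (X : C) : cell (id1 (Gob X)) (Gmor (id1 X)) :=
  initial_slice_cell (slid_fbar_initial X) (Gmor (id1 X)) (fbar_nat (id1 X) • lunit_inv (fbar X)).

Lemma GcellP {X Y : C} {u v : hom X Y} (α : cell u v) :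
  is_slice_cell (Gcell α) (fbar_nat u) (fbar_nat v • (α ⋆ id2 (fbar X))).
Proof. apply initial_slice_cellP. Qed.

Lemma GcompP {X Y Z : C} (v : hom Y Z) (u : hom X Y) :
  is_slice_cell (Gcomp v u) (slc (fbar_nat v) (csl v (fbar_nat u)))
    (fbar_nat (v ⊚ u) • assoc_inv v u (fbar X)).
Proof. apply initial_slice_cellP. Qed.

Lemma GunitP (X : C) :
  is_slice_cell (Gunit X) (slid (fbar X)) (fbar_nat (id1 X) • lunit_inv (fbar X)).
Proof. apply initial_slice_cellP. Qed.

Lemma Gcell_id {X Y : C} (u : hom X Y) : Gcell (id2 u) = id2 (Gmor u).
Proof.
  apply (initial_slice_cell_unique (fbar_nat_initial u)
           (φ := fbar_nat u • (id2 u ⋆ id2 (fbar X)))).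
  - apply GcellP.
  - rewrite (hid HC), (vid_r HC). apply slice_cell_id.
Qed.

Lemma Gcell_comp {X Y : C} (u v w : hom X Y) (β : cell v w) (α : cell u v) :
  Gcell (β • α) = Gcell β • Gcell α.
Proof.
  apply (initial_slice_cell_unique (fbar_nat_initial u)
           (φ := fbar_nat w • ((β • α) ⋆ id2 (fbar X)))).
  - apply GcellP.
  - eapply slice_cell_vcomp; [|apply GcellP].
    eapply slice_cell_cod_eq; [exact (slice_cell_precomp (α ⋆ id2 (fbar X)) (GcellP β))|].
    rewrite <- (vassoc HC), (hwr HC). reflexivity.
Qed.

Lemma Gcomp_nat {X Y Z : C} (v v' : hom Y Z) (u u' : hom X Y) (β : cell v v') (α : cell u u') :
  Gcomp v' u' • (Gcell β ⋆ Gcell α) = Gcell (β ⋆ α) • Gcomp v u.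
Proof.
  apply (initial_slice_cell_unique (slc_csl_initial v (fbar_nat u) (fbar_nat_initial u))
           (φ := fbar_nat (v' ⊚ u') • assoc_inv v' u' (fbar X) • (β ⋆ (α ⋆ id2 (fbar X))))).
  - eapply slice_cell_vcomp; [apply (slice_cell_precomp _ (GcompP v' u'))|].
    eapply slice_cell_cod_eq;
      [exact (slice_cell_hcomp (slice_cell_csl v (GcellP α)) (GcellP β))|].
    rewrite csl_precomp, slc_precomp, slc_csl_whisker, <- (vassoc HC), <- (hsplit1 HC).
    reflexivity.
  - eapply slice_cell_vcomp; [|exact (GcompP v u)].
    eapply slice_cell_cod_eq;
      [exact (slice_cell_precomp (assoc_inv v u (fbar X)) (GcellP (β ⋆ α)))|].
    rewrite <- !(vassoc HC), (assoc_inv_nat HC). reflexivity.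
Qed.

Lemma G_lax_assoc {X Y Z W : C} (h : hom Z W) (g : hom Y Z) (f : hom X Y) :
  Gcell (assoc h g f) • Gcomp (h ⊚ g) f • (Gcomp h g ⋆ id2 (Gmor f))
  = Gcomp h (g ⊚ f) • (id2 (Gmor h) ⋆ Gcomp g f) • assoc (Gmor h) (Gmor g) (Gmor f).
Proof.
  apply (initial_slice_cell_unique (slc_csl_initial2 h g (fbar_nat f) (fbar_nat_initial f))
    (φ := fbar_nat (h ⊚ (g ⊚ f)) • assoc_inv h (g ⊚ f) (fbar X)
          • (id2 h ⋆ assoc_inv g f (fbar X)))).
  - assert (L1 := slice_cell_hcomp (slice_cell_id (csl h (csl g (fbar_nat f)))) (GcompP h g)).
    rewrite slc_csl_comp in L1.
    assert (L2 := slice_cell_precomp (assoc_inv h g (f ⊚ fbar X)) (GcompP (h ⊚ g) f)).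
    assert (L3 := slice_cell_precomp (assoc_inv h g (f ⊚ fbar X))
                    (slice_cell_precomp (assoc_inv (h ⊚ g) f (fbar X)) (GcellP (assoc h g f)))).
    eapply slice_cell_cod_eq; [exact (slice_cell_vcomp (slice_cell_vcomp L3 L2) L1)|].
    rewrite (vpre3 HC (pentagon_assoc_inv_r HC h g f (fbar X))), !(vassoc HC). reflexivity.
  - assert (R1 := slice_cell_assoc (csl h (csl g (fbar_nat f))) (csl h (fbar_nat g)) (fbar_nat h)).
    assert (R2 := slice_cell_hcomp (slice_cell_csl h (GcompP g f)) (slice_cell_id (fbar_nat h))).
    rewrite csl_slc in R2.
    assert (R3 := slice_cell_precomp (id2 h ⋆ assoc_inv g f (fbar X)) (GcompP h (g ⊚ f))).
    rewrite <- slc_precomp, <- csl_precomp in R3.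
    exact (slice_cell_vcomp (slice_cell_vcomp R3 R2) R1).
Qed.

Lemma G_lax_lunit {X Y : C} (f : hom X Y) :
  Gcell (lunit f) • Gcomp (id1 Y) f • (Gunit Y ⋆ id2 (Gmor f)) = lunit (Gmor f).
Proof.
  assert (HS : is_initial_sl (slc (slid (fbar Y)) (fbar_nat f))).
  { apply (is_initial_sl_iso (lunit _) (lunit_inv _) (fbar_nat_initial f)).
    - apply slice_cell_lunit.
    - apply slice_cell_lunit_inv.
    - apply (lunit_iso2 HB). }
  apply (initial_slice_cell_unique HS (φ := fbar_nat f)); [|apply slice_cell_lunit].
  assert (L1 := slice_cell_hcomp (slice_cell_id (fbar_nat f)) (GunitP Y)).
  rewrite slc_csl_id in L1.
  assert (L2 := slice_cell_precomp (lunit_inv (f ⊚ fbar X)) (GcompP (id1 Y) f)).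
  assert (L3 := slice_cell_precomp (lunit_inv (f ⊚ fbar X))
                  (slice_cell_precomp (assoc_inv (id1 Y) f (fbar X)) (GcellP (lunit f)))).
  eapply slice_cell_cod_eq; [exact (slice_cell_vcomp (slice_cell_vcomp L3 L2) L1)|].
  rewrite (vpre HC (lunit_assoc_inv HC f (fbar X))), <- (vassoc HC), (lunit_iso1 HC), (vid_r HC).
  reflexivity.
Qed.

Lemma G_lax_runit {X Y : C} (f : hom X Y) :
  Gcell (runit f) • Gcomp f (id1 X) • (id2 (Gmor f) ⋆ Gunit X) = runit (Gmor f).
Proof.
  assert (HS : is_initial_sl (slc (fbar_nat f) (slid (f ⊚ fbar X)))).
  { apply (is_initial_sl_iso (runit _) (runit_inv _) (fbar_nat_initial f)).
    - apply slice_cell_runit.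
    - apply slice_cell_runit_inv.
    - apply (runit_iso2 HB). }
  apply (initial_slice_cell_unique HS (φ := fbar_nat f)); [|apply slice_cell_runit].
  assert (L1 := slice_cell_hcomp (slice_cell_csl f (GunitP X)) (slice_cell_id (fbar_nat f))).
  rewrite csl_slid, csl_precomp, slc_precomp in L1.
  assert (L2 := slice_cell_precomp (id2 f ⋆ lunit_inv (fbar X)) (GcompP f (id1 X))).
  assert (L3 := slice_cell_precomp (id2 f ⋆ lunit_inv (fbar X))
                  (slice_cell_precomp (assoc_inv f (id1 X) (fbar X)) (GcellP (runit f)))).
  eapply slice_cell_cod_eq; [exact (slice_cell_vcomp (slice_cell_vcomp L3 L2) L1)|].
  rewrite (vpre HC (triangle_inv HC f (fbar X))), <- (vassoc HC), (hwl HC), (lunit_iso1 HC).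
  rewrite (hid HC), (vid_r HC). reflexivity.
Qed.

Definition G_data : lax_data C B :=
  {| fob := Gob;
     fmor := fun X Y u => Gmor u;
     fcell := fun X Y u v α => Gcell α;
     fcomp := fun X Y Z v u => Gcomp v u;
     funit := Gunit |}.

Lemma G_is_lax : is_lax G_data.
Proof.
  constructor; cbn; intros.
  - apply Gcell_id.
  - apply Gcell_comp.
  - apply Gcomp_nat.
  - apply G_lax_assoc.
  - apply G_lax_lunit.
  - apply G_lax_runit.
Qed.

Definition G : lax_functor C B := {| lf_data := G_data; lf_ax := G_is_lax |}.

Definition counit_trans : ltrans (lcomp F G) (lid C) :=
  @Build_ltrans C C (lcomp F G) (lid C) (fun X => fbar X) (fun X Y u => fbar_nat u).

Lemma counit_trans_is_ltrans : is_ltrans counit_trans.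
Proof.
  constructor; cbn.
  - intros X Y u v θ. exact (GcellP θ).
  - intros X. pose proof (GunitP X) as H. unfold is_slice_cell, slid in H.
    rewrite (hid HC), (vid_r HC), <- (hwl HC).
    rewrite <- (vassoc HC _ _ (runit_inv _)), H, <- (vassoc HC), (lunit_iso2 HC), (vid_r HC).
    reflexivity.
  - intros X Y Z v u. pose proof (GcompP v u) as H. unfold is_slice_cell, slc, csl in H.
    rewrite !(vassoc HC) in H.
    rewrite (hid HC), (vid_r HC), <- (hwl HC), ?(vassoc HC), H.
    rewrite <- (vassoc HC), (assoc_iso2 HC), (vid_r HC). reflexivity.
Qed.

Definition eta_ob (A : B) : hom A (Gob (F A)) :=
  projT1 (to_term (F A) (existT _ A (id1 (F A)))).
Definition eta_tri (A : B) : cell (id1 (F A)) (fbar (F A) ⊚ fmor F (eta_ob A)) :=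
  projT2 (to_term (F A) (existT _ A (id1 (F A)))).

Lemma eta_tri_initial (A : B) : is_initial_sl (eta_tri A).
Proof. exact (to_term_initial (F A) (existT _ A (id1 (F A)))). Qed.

(** [η_f] is the unique 2-cell from the initial 1-cell [(G F f, ε_{F f}) ∘ (F↓F f)(η_A, _)]
    to the composite [(η_A', _) ∘ (f, unitor_swap f)] in [F ↓ F A']. *)
Definition eta_nat_dom {A A' : B} (f : hom A A') :
  cell (fmor F f ⊚ id1 (F A)) (fbar (F A') ⊚ fmor F (Gmor (fmor F f) ⊚ eta_ob A)) :=
  slc (fbar_nat (fmor F f)) (csl (fmor F f) (eta_tri A)).
Definition eta_nat_cod {A A' : B} (f : hom A A') :
  cell (fmor F f ⊚ id1 (F A)) (fbar (F A') ⊚ fmor F (eta_ob A' ⊚ f)) :=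
  slc (eta_tri A') (unitor_swap f).

Lemma eta_nat_dom_initial {A A' : B} (f : hom A A') : is_initial_sl (eta_nat_dom f).
Proof. exact (slc_csl_initial (fmor F f) (eta_tri A) (eta_tri_initial A)). Qed.

Definition eta_nat {A A' : B} (f : hom A A') : cell (Gmor (fmor F f) ⊚ eta_ob A) (eta_ob A' ⊚ f) :=
  initial_slice_cell (eta_nat_dom_initial f) (eta_ob A' ⊚ f) (eta_nat_cod f).

Lemma eta_natP {A A' : B} (f : hom A A') : is_slice_cell (eta_nat f) (eta_nat_dom f) (eta_nat_cod f).
Proof. apply initial_slice_cellP. Qed.

Lemma eta_nat_natural {A A' : B} (f f' : hom A A') (θ : cell f f') :
  (id2 (eta_ob A') ⋆ θ) • eta_nat f = eta_nat f' • (Gcell (fcell F θ) ⋆ id2 (eta_ob A)).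
Proof.
  apply (initial_slice_cell_unique (eta_nat_dom_initial f)
           (φ := eta_nat_cod f' • (fcell F θ ⋆ id2 (id1 (F A))))).
  - eapply slice_cell_vcomp; [|apply eta_natP].
    eapply slice_cell_cod_eq;
      [exact (slice_cell_hcomp (slice_cell_unitor_swap θ) (slice_cell_id (eta_tri A')))|].
    unfold eta_nat_cod. rewrite slc_precomp. reflexivity.
  - eapply slice_cell_vcomp;
      [exact (slice_cell_precomp (fcell F θ ⋆ id2 (id1 (F A))) (eta_natP f'))|].
    eapply slice_cell_cod_eq;
      [exact (slice_cell_hcomp (slice_cell_id (csl (fmor F f) (eta_tri A)))
                (GcellP (fcell F θ)))|].
    unfold eta_nat_dom. rewrite slc_csl_whisker. reflexivity.
Qed.

Lemma eta_lax_unit (A : B) :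
  eta_nat (id1 A) • ((Gcell (funit F A) • Gunit (F A)) ⋆ id2 (eta_ob A))
  = (id2 (eta_ob A) ⋆ id2 (id1 A)) • runit_inv (eta_ob A) • lunit (eta_ob A).
Proof.
  assert (HS : is_initial_sl (slc (slid (fbar (F A))) (eta_tri A))).
  { apply (is_initial_sl_iso (lunit _) (lunit_inv _) (eta_tri_initial A)).
    - apply slice_cell_lunit.
    - apply slice_cell_lunit_inv.
    - apply (lunit_iso2 HB). }
  apply (initial_slice_cell_unique HS (φ := slc (eta_tri A) (slid (id1 (F A))))).
  - rewrite <- (hwr HB).
    assert (K := slice_cell_hcomp (slice_cell_id (eta_tri A)) (GunitP (F A))).
    rewrite slc_csl_id in K.
    assert (M := slice_cell_hcomp (slice_cell_id (eta_tri A))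
                   (slice_cell_precomp (lunit_inv (fbar (F A))) (GcellP (funit F A)))).
    rewrite !slc_csl_id, slc_csl_whisker in M.
    assert (N := slice_cell_precomp (lunit_inv (id1 (F A)))
                   (slice_cell_precomp (funit F A ⋆ id2 (id1 (F A))) (eta_natP (id1 A)))).
    eapply slice_cell_cod_eq; [exact (slice_cell_vcomp N (slice_cell_vcomp M K))|].
    unfold eta_nat_cod. rewrite <- !slc_precomp, unitor_swap_id. reflexivity.
  - exact (slice_cell_vcomp
             (slice_cell_vcomp
                (slice_cell_hcomp (slice_cell_id (slid (id1 (F A)))) (slice_cell_id (eta_tri A)))
                (slice_cell_runit_inv (eta_tri A)))
             (slice_cell_lunit (eta_tri A))).
Qed.

Lemma eta_lax_nat {A1 A2 A3 : B} (g : hom A2 A3) (f : hom A1 A2) :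
  eta_nat (g ⊚ f) • ((Gcell (fcomp F g f) • Gcomp (fmor F g) (fmor F f)) ⋆ id2 (eta_ob A1))
  = (id2 (eta_ob A3) ⋆ id2 (g ⊚ f)) • assoc (eta_ob A3) g f • (eta_nat g ⋆ id2 f)
    • assoc_inv (Gmor (fmor F g)) (eta_ob A2) f • (id2 (Gmor (fmor F g)) ⋆ eta_nat f)
    • assoc (Gmor (fmor F g)) (Gmor (fmor F f)) (eta_ob A1).
Proof.
  apply (initial_slice_cell_unique
           (slc_csl_initial2 (fmor F g) (fmor F f) (eta_tri A1) (eta_tri_initial A1))
           (φ := slc (eta_tri A3) (slc (unitor_swap g) (csl (fmor F g) (unitor_swap f))))).
  - rewrite <- (hwr HB).
    assert (K := slice_cell_hcomp (slice_cell_id (csl (fmor F g) (csl (fmor F f) (eta_tri A1))))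
                   (GcompP (fmor F g) (fmor F f))).
    rewrite slc_csl_comp in K.
    assert (M := slice_cell_precomp (assoc_inv (fmor F g) (fmor F f) (id1 (F A1)))
                   (slice_cell_hcomp (slice_cell_id (csl (fmor F g ⊚ fmor F f) (eta_tri A1)))
                      (GcellP (fcomp F g f)))).
    rewrite slc_csl_whisker in M.
    assert (N := slice_cell_precomp (assoc_inv (fmor F g) (fmor F f) (id1 (F A1)))
                   (slice_cell_precomp (fcomp F g f ⋆ id2 (id1 (F A1))) (eta_natP (g ⊚ f)))).
    eapply slice_cell_cod_eq; [exact (slice_cell_vcomp N (slice_cell_vcomp M K))|].
    unfold eta_nat_cod. rewrite <- !slc_precomp, unitor_swap_comp. reflexivity.
  - assert (R1 := slice_cell_assoc (csl (fmor F g) (csl (fmor F f) (eta_tri A1)))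
                    (csl (fmor F g) (fbar_nat (fmor F f))) (fbar_nat (fmor F g))).
    assert (R2 := slice_cell_hcomp (slice_cell_csl (fmor F g) (eta_natP f))
                    (slice_cell_id (fbar_nat (fmor F g)))).
    unfold eta_nat_dom, eta_nat_cod in R2. rewrite !csl_slc in R2.
    assert (R3 := slice_cell_assoc_inv (csl (fmor F g) (unitor_swap f))
                    (csl (fmor F g) (eta_tri A2)) (fbar_nat (fmor F g))).
    assert (R4 := slice_cell_hcomp (slice_cell_id (csl (fmor F g) (unitor_swap f))) (eta_natP g)).
    assert (R5 := slice_cell_assoc (csl (fmor F g) (unitor_swap f)) (unitor_swap g) (eta_tri A3)).
    assert (R6 := slice_cell_hcomp
                    (slice_cell_id (slc (unitor_swap g) (csl (fmor F g) (unitor_swap f))))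
                    (slice_cell_id (eta_tri A3))).
    exact (slice_cell_vcomp
             (slice_cell_vcomp (slice_cell_vcomp (slice_cell_vcomp (slice_cell_vcomp R6 R5) R4) R3) R2)
             R1).
Qed.

Definition unit_trans : ltrans (lid B) (lcomp G F) :=
  @Build_ltrans B B (lid B) (lcomp G F) (fun A => eta_ob A) (fun A A' f => eta_nat f).

Lemma unit_trans_is_ltrans : is_ltrans unit_trans.
Proof.
  constructor; intros.
  - apply eta_nat_natural.
  - apply eta_lax_unit.
  - apply eta_lax_nat.
Qed.

End QuasiInverse.
End SliceCalculus.

Theorem theorem5p1 (B C : bicat) (F : lax_functor B C)
  (T : forall X : C, inc_lax_terminal (slice F X))
  (Hpres : forall (X Y : C) (u : hom X Y),
      preserves_initial_components (T X) (T Y) (change_slice F u)) :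
  exists G : lax_functor C B,
    (exists η : ltrans (lid B) (lcomp G F), is_ltrans η) /\
    (exists ε : ltrans (lcomp F G) (lid C), is_ltrans ε).
Proof.
  exists (G T Hpres).
  split.
  - exists (unit_trans T Hpres). exact (unit_trans_is_ltrans T Hpres).
  - exists (counit_trans T Hpres). exact (counit_trans_is_ltrans T Hpres).
Qed.
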